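(* (Optimality condition) Let $\mathcal{X}$ be a nonempty convex subset of $\mathbb{R}^n$ and $\mathbf{F}:\mathcal{X}\to I(\mathbb{R})$ a convex interval-valued function. If $\widehat{\mathbf{0}}=(\mathbf{0},\dots,\mathbf{0})\in\partial\mathbf{F}(\bar{x})$ for some $\bar{x}\in\mathcal{X}$, then $\bar{x}$ is an efficient solution of the problem $\min_{x\in\mathcal{X}}\mathbf{F}(x)$.
   Context: $I(\mathbb{R})$: nonempty compact intervals $\mathbf{A}=[\underline{a},\overline{a}]$; $\mathbf{0}=[0,0]$; $\mathbf{A}\oplus\mathbf{B}=[\underline{a}+\underline{b},\overline{a}+\overline{b}]$; $\lambda\odot\mathbf{A}=[\min\{\lambda\underline{a},\lambda\overline{a}\},\max\{\lambda\underline{a},\lambda\overline{a}\}]$; $\mathbf{A}\ominus_{gH}\mathbf{B}=[\min\{\underline{a}-\underline{b},\overline{a}-\overline{b}\},\max\{\underline{a}-\underline{b},\overline{a}-\overline{b}\}]$; $\mathbf{A}\preceq\mathbf{B}$ iff $\underline{a}\le\underline{b}$ and $\overline{a}\le\overline{b}$; $\mathbf{A}\prec\mathbf{B}$ iff either ($\underline{a}\le\underline{b}$ and $\overline{a}<\overline{b}$) or ($\underline{a}<\underline{b}$ and $\overline{a}\le\overline{b}$); $d^T\odot\widehat{\mathbf{G}}=\bigoplus_i d_i\odot\mathbf{G}_i$. Convex IVF: $\mathbf{F}(\lambda x_1+(1-\lambda)x_2)\preceq\lambda\odot\mathbf{F}(x_1)\oplus(1-\lambda)\odot\mathbf{F}(x_2)$.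 $gH$-subgradient at $\bar{x}$: $\widehat{\mathbf{G}}\in I(\mathbb{R})^n$ with $(x-\bar{x})^T\odot\widehat{\mathbf{G}}\preceq\mathbf{F}(x)\ominus_{gH}\mathbf{F}(\bar{x})$ for all $x\in\mathcal{X}$; $\partial\mathbf{F}(\bar{x})$ is their set. A point $\bar{x}\in\mathcal{X}$ is an efficient solution of $\min_{x\in\mathcal{X}}\mathbf{F}(x)$ if $\mathbf{F}(x)\not\prec\mathbf{F}(\bar{x})$ for all $x\in\mathcal{X}$, $x\ne\bar{x}$. *)

From HB Require Import structures.
From mathcomp Require Import all_boot all_order all_algebra.
From mathcomp Require Import reals.
Set Implicit Arguments. Unset Strict Implicit. Unset Printing Implicit Defensive.
Import Order.TTheory GRing.Theory Num.Theory.
Local Open Scope ring_scope.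

Section IntervalArith.
Variable R : realType.

Record cinterval := CItv { ilo : R; ihi : R; ilo_le_ihi : ilo <= ihi }.

Lemma min_le_max (a b : R) : Num.min a b <= Num.max a b.
Proof. by case: (leP a b) => h; rewrite ?minEle ?maxEle ?h //= ltW. Qed.

Definition izero : cinterval := @CItv 0 0 (lexx 0).

Definition iadd (A B : cinterval) : cinterval :=
  @CItv (ilo A + ilo B) (ihi A + ihi B) (lerD (ilo_le_ihi A) (ilo_le_ihi B)).

Definition iscale (l : R) (A : cinterval) : cinterval :=
  @CItv (Num.min (l * ilo A) (l * ihi A)) (Num.max (l * ilo A) (l * ihi A))
        (min_le_max _ _).

Definition igHsub (A B : cinterval) : cinterval :=
  @CItv (Num.min (ilo A - ilo B) (ihi A - ihi B))
        (Num.max (ilo A - ilo B) (ihi A - ihi B)) (min_le_max _ _).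

Definition ile (A B : cinterval) : Prop := ilo A <= ilo B /\ ihi A <= ihi B.

Definition ilt (A B : cinterval) : Prop :=
  (ilo A <= ilo B /\ ihi A < ihi B) \/ (ilo A < ilo B /\ ihi A <= ihi B).

Definition idot (n : nat) (d : 'rV[R]_n) (G : 'I_n -> cinterval) : cinterval :=
  \big[iadd/izero]_(i < n) iscale (d ord0 i) (G i).

Definition convex_set (n : nat) (X : 'rV[R]_n -> Prop) : Prop :=
  forall x1 x2 (l : R), X x1 -> X x2 -> 0 <= l <= 1 ->
    X (l *: x1 + (1 - l) *: x2).

Definition convex_ivf (n : nat) (X : 'rV[R]_n -> Prop)
    (F : 'rV[R]_n -> cinterval) : Prop :=
  forall x1 x2 (l : R), X x1 -> X x2 -> 0 <= l <= 1 ->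
    ile (F (l *: x1 + (1 - l) *: x2)) (iadd (iscale l (F x1)) (iscale (1 - l) (F x2))).

Definition gH_subgradient (n : nat) (X : 'rV[R]_n -> Prop)
    (F : 'rV[R]_n -> cinterval) (xbar : 'rV[R]_n) (G : 'I_n -> cinterval) : Prop :=
  forall x, X x -> ile (idot (x - xbar) G) (igHsub (F x) (F xbar)).

Definition efficient (n : nat) (X : 'rV[R]_n -> Prop)
    (F : 'rV[R]_n -> cinterval) (xbar : 'rV[R]_n) : Prop :=
  X xbar /\ forall x, X x -> x <> xbar -> ~ ilt (F x) (F xbar).

End IntervalArith.

From HB Require Import structures.
From mathcomp Require Import all_boot all_order all_algebra.
From mathcomp Require Import reals.
Import Order.TTheory GRing.Theory Num.Theory.
Local Open Scope ring_scope.

(* If the zero vector is a gH-subgradient at xbar, then 0 = (x - xbar)^T 0 <= F(x) -gH F(xbar)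
   for every feasible x, which says exactly F(xbar) <= F(x) endpointwise; and no interval can
   lie strictly below one it dominates. *)

Section IntervalOrder.
Variable R : realType.
Implicit Types A B : cinterval R.

Lemma cinterval_eq A B : ilo A = ilo B -> ihi A = ihi B -> A = B.
Proof.
case: A B => [a a' h] [b b' k] /= eab eab'.
by subst b b'; rewrite (bool_irrelevance h k).
Qed.

Lemma iadd_izero : iadd (izero R) (izero R) = izero R.
Proof. by apply: cinterval_eq; rewrite /= addr0. Qed.

Lemma iscale_izero (l : R) : iscale l (izero R) = izero R.
Proof. by apply: cinterval_eq; rewrite /= mulr0 ?minxx ?maxxx. Qed.

Lemma idot_izero (n : nat) (d : 'rV[R]_n) : idot d (fun _ => izero R) = izero R.
Proof.
apply: (big_ind (fun A => A = izero R)) => // [A B -> ->|i _].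
- exact: iadd_izero.
- exact: iscale_izero.
Qed.

Lemma ile_izero_igHsub A B : ile (izero R) (igHsub A B) <-> ile B A.
Proof.
rewrite /ile /= le_min le_max !subr_ge0.
split=> [[/andP[] //]|[lo hi]]; split; first by rewrite lo hi.
by rewrite lo.
Qed.

Lemma ile_not_ilt A B : ile B A -> ~ ilt A B.
Proof.
move=> [lo hi] [[_ lt]|[lt _]].
- by move: (lt_le_trans lt hi); rewrite ltxx.
- by move: (lt_le_trans lt lo); rewrite ltxx.
Qed.

End IntervalOrder.

Theorem mainTheorem17 (R : realType) (n : nat) (X : 'rV[R]_n -> Prop)
    (F : 'rV[R]_n -> cinterval R) (xbar : 'rV[R]_n) :
  (exists x, X x) ->
  convex_set X ->
  convex_ivf X F ->
  X xbar ->
  gH_subgradient X F xbar (fun _ => izero R) ->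
  efficient X F xbar.
Proof.
move=> _ _ _ Xxbar zero_subgrad; split=> // x Xx _.
have := zero_subgrad x Xx.
rewrite idot_izero => /ile_izero_igHsub.
exact: ile_not_ilt.
Qed.
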